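(* Let $S$ be a finite set, $Z\subseteq S$, and $\mathcal{A}\subseteq\{X\subseteq S\mid Z\subseteq X\}$. Let $I_{\mathcal{A}}=\{\{Y\mid Z\subseteq Y\subseteq X\}\mid X\in\mathcal{A}\}$ and $I'_{\mathcal{A}}=\{2^X\mid X\in\mathcal{A}\}$. Then for every $\mathcal{C}\in\bullet(I_{\mathcal{A}})$, the configuration $\mathrm{lift}_Z(\mathcal{C})=\{X\subseteq S\mid X\cup Z\in\mathcal{C}\}$ satisfies $\mathrm{lift}_Z(\mathcal{C})\in\bullet(I'_{\mathcal{A}})$.
   Context: Here $2^X=\{Y\subseteq S\mid Y\subseteq X\}$. For sets $A,B$, $A\,\dot\cup\,B=A\cup B$ is defined only when $A\cap B=\emptyset$, and $A\,\dot\setminus\,B=A\setminus B$ is defined only when $B\subseteq A$. For a finite family $\mathcal{G}$ of sets, $\bullet(\mathcal{G})$ is the smallest family of sets containing $\emptyset$ and every member of $\mathcal{G}$ and closed under all well-defined disjoint unions and subset complements. *)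

From mathcomp Require Import all_boot.
Set Implicit Arguments. Unset Strict Implicit. Unset Printing Implicit Defensive.

Inductive bullet (U : finType) (G : {set {set U}}) : {set U} -> Prop :=
| bullet_empty : bullet G set0
| bullet_gen A : A \in G -> bullet G A
| bullet_dunion A B : bullet G A -> bullet G B -> [disjoint A & B] ->
    bullet G (A :|: B)
| bullet_dsub A B : bullet G A -> bullet G B -> B \subset A ->
    bullet G (A :\: B).

(* S is modelled by the finite type T (subsets of S = {set T}). *)

Definition I_fam (T : finType) (Z : {set T}) (A : {set {set T}})
  : {set {set {set T}}} :=
  [set [set Y : {set T} | (Z \subset Y) && (Y \subset X)] | X : {set T} in A].

Definition I'_fam (T : finType) (A : {set {set T}}) : {set {set {set T}}} :=
  [set powerset X | X : {set T} in A].

Definition liftZ (T : finType) (Z : {set T}) (C : {set {set T}})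
  : {set {set T}} :=
  [set X : {set T} | (X :|: Z) \in C].

(** [lift_Z] is the preimage under [X |-> X ∪ Z], and taking preimages commutes
    with unions, differences and disjointness, so it maps [•(G)] into [•(H)] as
    soon as it maps each generator into [•(H)].  The preimage of the interval
    [{Y | Z ⊆ Y ⊆ X}] is exactly [2^X] whenever [Z ⊆ X]. *)
From mathcomp Require Import all_boot.

Lemma bullet_preimset (U V : finType) (f : U -> V) (G : {set {set V}})
    (H : {set {set U}}) :
  (forall B, B \in G -> bullet H (f @^-1: B)) ->
  forall B, bullet G B -> bullet H (f @^-1: B).
Proof.
move=> preimG B; elim=> {B} [|B /preimG //|B C _ HB _ HC disBC|B C _ HB _ HC sCB].
- by rewrite preimset0; exact: bullet_empty.
- rewrite preimsetU; apply: bullet_dunion => //.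
  move: disBC; rewrite -!setI_eq0 -preimsetI => /eqP ->.
  by rewrite preimset0.
- by rewrite preimsetD; apply: bullet_dsub => //; exact: preimsetS.
Qed.

Lemma liftZE (T : finType) (Z : {set T}) (C : {set {set T}}) :
  liftZ Z C = (fun Y : {set T} => Y :|: Z) @^-1: C.
Proof. by apply/setP=> X; rewrite !inE. Qed.

Lemma preimset_setUr_interval (T : finType) (Z X : {set T}) :
  Z \subset X ->
  (fun Y : {set T} => Y :|: Z)
    @^-1: [set Y : {set T} | (Z \subset Y) && (Y \subset X)] = powerset X.
Proof. by move=> sZX; apply/setP=> Y; rewrite !inE subsetUr subUset sZX andbT. Qed.

Theorem lemma6p10 (T : finType) (Z : {set T}) (A : {set {set T}}) :
  (forall X, X \in A -> Z \subset X) ->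
  forall C : {set {set T}}, bullet (I_fam Z A) C ->
  bullet (I'_fam A) (liftZ Z C).
Proof.
move=> sZA C bulletC; rewrite liftZE; apply: bullet_preimset bulletC.
move=> _ /imsetP [X XA ->]; rewrite preimset_setUr_interval ?sZA //.
by apply: bullet_gen; apply: imset_f.
Qed.
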